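(* Let $A=\{a_1,\dots,a_n\}$ and $L\subseteq a_1^*\cdots a_n^*$. Let $T=\{(a_1^{k_1}\cdots a_n^{k_n},\ a_1^{2k_1}\cdots a_n^{2k_n})\mid k_1,\dots,k_n\ge0\}$, $T(\downarrow L)=\{w\mid \exists v\in\downarrow L,\ (v,w)\in T\}$, and $K=\{a_1^{2k_1+1}\cdots a_n^{2k_n+1}\mid k_1,\dots,k_n\ge0\}$. Then $T(\downarrow L)$ and $K$ are not separable by a piecewise testable language if and only if $\downarrow L=a_1^*\cdots a_n^*$.
   Context: $\downarrow L$ denotes the set of all subsequences of words of $L$. A piecewise testable language is a finite Boolean combination of languages $A^*c_1A^*\cdots A^*c_kA^*$; two languages are separable by PTL if some piecewise testable $S$ contains the first and is disjoint from the second. *)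

(* Alphabet A = {a_1,...,a_n} is modelled as 'I_n
   (a_i = the ordinal i-1, letters ordered by the ordinal order). *)
From mathcomp Require Import all_boot.
Set Implicit Arguments. Unset Strict Implicit. Unset Printing Implicit Defensive.

Definition word (n : nat) := seq 'I_n.
Definition lang (n : nat) := word n -> Prop.

Definition blockw (n : nat) (k : 'I_n -> nat) : word n :=
  flatten [seq nseq (k i) i | i <- enum 'I_n].

Definition blocks (n : nat) : lang n := fun w => exists k, w = blockw k.

Definition down (n : nat) (L : lang n) : lang n :=
  fun u => exists w, L w /\ subseq u w.

Definition Timage (n : nat) (L' : lang n) : lang n :=
  fun w => exists k : 'I_n -> nat, L' (blockw k) /\ w = blockw (fun i => 2 * k i).

Definition Klang (n : nat) : lang n :=
  fun w => exists k : 'I_n -> nat, w = blockw (fun i => (2 * k i).+1).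

(* Finite Boolean combinations of the languages A^* c_1 A^* ... A^* c_k A^* *)
Inductive ptl_expr (n : nat) : Type :=
| PAtom of word n
| PNot of ptl_expr n
| PAnd of ptl_expr n & ptl_expr n
| POr of ptl_expr n & ptl_expr n.

Fixpoint ptl_mem (n : nat) (e : ptl_expr n) (w : word n) : bool :=
  match e with
  | PAtom c => subseq c w
  | PNot e1 => ~~ ptl_mem e1 w
  | PAnd e1 e2 => ptl_mem e1 w && ptl_mem e2 w
  | POr e1 e2 => ptl_mem e1 w || ptl_mem e2 w
  end.

Definition ptl_separable (n : nat) (L1 L2 : lang n) : Prop :=
  exists e : ptl_expr n,
    (forall w, L1 w -> ptl_mem e w) /\ (forall w, L2 w -> ~~ ptl_mem e w).

From mathcomp Require Import all_boot.
From mathcomp Require Import zify.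
From Stdlib Require Import Classical.
Set Implicit Arguments. Unset Strict Implicit. Unset Printing Implicit Defensive.

(* If every block word lies in [down L], pump all exponents to [2M] and
   [2M+1] where [M] bounds the atoms of a candidate separator: these two words
   lie in [Timage (down L)] and in [K] respectively, yet they have the same
   subwords of length at most [M], so no piecewise testable expression tells
   them apart.  Conversely, if some [a_1^k_1 ... a_n^k_n] is not in [down L],
   every element [a_1^j_1 ... a_n^j_n] of [down L] has some [j_i < k_i],
   so every word of [Timage (down L)] has an even number [2 j_i < 2 k_i] of
   some letter [a_i], while every word of [K] has odd letter counts; the
   finitely many conditions "#a_i = 2t", [t < k_i], are piecewise testable. *)

Section BlockWords.

Variable T : eqType.

Definition blockseq (s : seq T) (k : T -> nat) : seq T :=
  flatten [seq nseq (k x) x | x <- s].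

Lemma subseq_nseq_cat (x : T) a r u :
  subseq u (nseq a x ++ r) ->
  exists b u2, [/\ b <= a, u = nseq b x ++ u2 & subseq u2 r].
Proof.
elim: a u => [|a IH] u /=; first by move=> h; exists 0, u.
case: u => [|y u] h; first by exists 0, [::]; rewrite sub0seq.
move: h => /=; case: eqP => [->|_] /IH [b [u2 [le_ba -> sub_u2]]].
- by exists b.+1, u2.
- by exists b, u2; rewrite leqW.
Qed.

Lemma subseq_nseq_count (x : T) e w :
  subseq (nseq e x) w = (e <= count_mem x w).
Proof.
elim: w e => [|y w IH] [|e] //=.
by case: (eqVneq x y) => _; rewrite /= -?(IH e.+1) ?IH.
Qed.

Lemma subseq_nseq (x : T) a b : a <= b -> subseq (nseq a x) (nseq b x).
Proof. by move=> le_ab; rewrite -(subnKC le_ab) nseqD prefix_subseq. Qed.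

Lemma subseq_blockseq (s : seq T) k j :
  (forall x, k x <= j x) -> subseq (blockseq s k) (blockseq s j).
Proof.
by move=> le_kj; elim: s => //= x s IH; rewrite cat_subseq ?subseq_nseq.
Qed.

Lemma subseq_blockseq_exists (s : seq T) k u :
  uniq s -> subseq u (blockseq s k) -> exists j, u = blockseq s j.
Proof.
elim: s u => [|x s IH] u /=; first by move=> _ /eqP ->; exists k.
case/andP=> x_notin_s /IH{}IH /subseq_nseq_cat [b [u2 [_ -> /IH [j ->]]]].
exists (fun y => if y == x then b else j y); rewrite /blockseq /= eqxx.
congr (_ ++ flatten _); apply/eq_in_map => y y_in_s.
by case: eqP y_in_s x_notin_s => // ->->.
Qed.

Lemma subseq_blockseq_short (s : seq T) M p q c :
  (forall x, M <= q x) -> size c <= M ->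
  subseq c (blockseq s p) -> subseq c (blockseq s q).
Proof.
move=> ge_qM; elim: s c => [|x s IH] c //= size_c.
move/subseq_nseq_cat => [b [u2 [le_bp ec sub_u2]]]; subst c.
move: size_c; rewrite size_cat size_nseq => size_c.
rewrite cat_subseq ?IH //; last by lia.
by apply: subseq_nseq; have := ge_qM x; lia.
Qed.

Lemma count_blockseq (s : seq T) k y :
  uniq s -> count_mem y (blockseq s k) = if y \in s then k y else 0.
Proof.
elim: s => //= x s IH /andP[x_notin_s /IH{}IH].
rewrite count_cat count_nseq IH in_cons eq_sym.
case: (eqVneq x y) => [<-|ne] /=; first by rewrite eqxx (negbTE x_notin_s) mul1n addn0.
by rewrite (negbTE ne).
Qed.

End BlockWords.

Lemma blockwE n (k : 'I_n -> nat) : blockw k = blockseq (enum 'I_n) k.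
Proof. by []. Qed.

Lemma count_blockw n (k : 'I_n -> nat) i : count_mem i (blockw k) = k i.
Proof. by rewrite blockwE count_blockseq ?enum_uniq ?mem_enum. Qed.

Lemma blockw_mono n (k j : 'I_n -> nat) :
  (forall i, k i <= j i) -> subseq (blockw k) (blockw j).
Proof. exact: subseq_blockseq. Qed.

Lemma subseq_short_blockw n M (p q : 'I_n -> nat) c :
  (forall i, M <= p i) -> (forall i, M <= q i) -> size c <= M ->
  subseq c (blockw p) = subseq c (blockw q).
Proof.
by move=> ge_pM ge_qM le_cM; apply/idP/idP; apply: subseq_blockseq_short le_cM.
Qed.

Lemma blocks_subseq_blockw n (k : 'I_n -> nat) u :
  subseq u (blockw k) -> blocks u.
Proof. exact: subseq_blockseq_exists (enum_uniq _). Qed.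

Section PiecewiseTestable.

Variable n : nat.

Fixpoint ptl_size (e : ptl_expr n) : nat :=
  match e with
  | PAtom c => size c
  | PNot e1 => ptl_size e1
  | PAnd e1 e2 | POr e1 e2 => maxn (ptl_size e1) (ptl_size e2)
  end.

Lemma ptl_mem_short_subseq (e : ptl_expr n) u v :
  (forall c, size c <= ptl_size e -> subseq c u = subseq c v) ->
  ptl_mem e u = ptl_mem e v.
Proof.
elim: e => [c|e IH|e1 IH1 e2 IH2|e1 IH1 e2 IH2] /= same_sub; first exact: same_sub.
- by rewrite IH.
- by rewrite IH1 ?IH2 // => c le_c; apply: same_sub; rewrite leq_max le_c ?orbT.
- by rewrite IH1 ?IH2 // => c le_c; apply: same_sub; rewrite leq_max le_c ?orbT.
Qed.

Fixpoint ptl_any (l : seq (ptl_expr n)) : ptl_expr n :=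
  match l with
  | [::] => PNot (PAtom [::])
  | e :: l' => POr e (ptl_any l')
  end.

Lemma ptl_mem_any (T : Type) (f : T -> ptl_expr n) s w :
  ptl_mem (ptl_any (map f s)) w = has (fun x => ptl_mem (f x) w) s.
Proof. by elim: s => [|x s /= ->] /=; rewrite ?sub0seq. Qed.

Definition ptl_count_eq (i : 'I_n) (m : nat) : ptl_expr n :=
  PAnd (PAtom (nseq m i)) (PNot (PAtom (nseq m.+1 i))).

Lemma ptl_mem_count_eq i m w :
  ptl_mem (ptl_count_eq i m) w = (count_mem i w == m).
Proof.
by rewrite /= -[i :: _]/(nseq m.+1 i) !subseq_nseq_count eqn_leq andbC -ltnNge.
Qed.

End PiecewiseTestable.

Lemma down_blocks n (L : lang n) :
  (forall w, L w -> blocks w) -> forall w, down L w -> blocks w.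
Proof. by move=> hL w [_ [/hL [k ->]]]; apply: blocks_subseq_blockw. Qed.

Lemma not_separable_of_blocks_down n (L : lang n) :
  (forall w, blocks w -> down L w) -> ~ ptl_separable (Timage (down L)) (@Klang n).
Proof.
move=> blocks_down [e [sep_T sep_K]].
set M := ptl_size e.
have mem_even : ptl_mem e (blockw (fun _ => 2 * M)).
  apply: sep_T; exists (fun _ => M); split=> //.
  by apply: blocks_down; exists (fun _ => M).
have /negP[] : ~~ ptl_mem e (blockw (fun _ => (2 * M).+1)).
  by apply: sep_K; exists (fun _ => M).
rewrite -(ptl_mem_short_subseq (u := blockw (fun _ => 2 * M))) // => c le_cM.
by apply: subseq_short_blockw le_cM => _ /=; lia.
Qed.

Lemma separable_of_not_down n (L : lang n) (k : 'I_n -> nat) :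
  ~ down L (blockw k) -> ptl_separable (Timage (down L)) (@Klang n).
Proof.
move=> k_notin.
exists (ptl_any [seq ptl_any [seq ptl_count_eq i (2 * t) | t <- iota 0 (k i)]
                | i <- enum 'I_n]).
split=> [_ [j [down_j ->]]|_ [j ->]]; rewrite ptl_mem_any; last first.
  apply/hasPn => i _; rewrite ptl_mem_any; apply/hasPn => t _.
  by rewrite ptl_mem_count_eq count_blockw; lia.
have [i lt_jk] : exists i, j i < k i.
  apply/existsP; apply: contra_notT k_notin => /existsPn all_ge.
  case: down_j => w [Lw sub_w]; exists w; split=> //.
  by apply: subseq_trans sub_w; apply: blockw_mono => i; rewrite leqNgt all_ge.
apply/hasP; exists i; rewrite ?mem_enum // ptl_mem_any.
by apply/hasP; exists (j i); rewrite ?mem_iota // ptl_mem_count_eq count_blockw.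
Qed.

Theorem mainTheorem9 (n : nat) (L : lang n)
  (hL : forall w, L w -> blocks w) :
  ~ ptl_separable (Timage (down L)) (@Klang n) <->
  (forall w, down L w <-> blocks w).
Proof.
split=> [not_sep w|down_eq]; last by apply: not_separable_of_blocks_down => w /down_eq.
split; first exact: down_blocks.
case=> k ->; apply: NNPP => /separable_of_not_down; exact: not_sep.
Qed.
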